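(* Suppose $n,\Delta\geq2$. Let $(T,r)$ be a rooted tree on $n$ vertices with $\Delta(T)\leq\Delta$, and let $n_0\in\mathbb{N}$ with $n\leq n_0<n^4$. Then there exist pairwise vertex-disjoint rooted subtrees $(T_1,t_1),\ldots,(T_k,t_k)$ of $T$ such that, writing $n_i:=n_0-|T_1\cup\cdots\cup T_i|+1$, (i) $V(T)=\bigcup_{i=1}^kV(T_i)$; (ii) $T_i\subseteq T(t_i)$ for every $i\in[k]$; (iii) the depths of $t_1,\ldots,t_k$ are non-decreasing; (iv) $n_{i-1}^{1/4}\leq|T_i|\leq\frac52\Delta n_{i-1}^{1/4}$ for every $i\in[k]$.
   Context: A rooted subtree $(T_i,t_i)$ is a subtree $T_i$ of $T$ together with a designated vertex $t_i\in V(T_i)$. The depth of a vertex $v$ in $(T,r)$ is the length of the path from $r$ to $v$. For $v\in V(T)$, $T(v)$ is the subtree of $T$ consisting of all vertices $u$ such that the path from $u$ to $r$ contains $v$ (including $v$). $|T_1\cup\cdots\cup T_i|$ is the number of vertices in the union. *)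

From HB Require Import structures.
From mathcomp Require Import all_boot all_order all_algebra.
From mathcomp Require Import boolp reals exp.
Set Implicit Arguments. Unset Strict Implicit. Unset Printing Implicit Defensive.

Definition simple_graph (V : finType) (e : rel V) : Prop :=
  symmetric e /\ irreflexive e.

Definition has_cycle (V : finType) (e : rel V) : Prop :=
  exists (v0 : V) (p : seq V),
    2 <= size p /\ uniq (v0 :: p) /\ path e v0 p /\ e (last v0 p) v0.

Definition connected_graph (V : finType) (e : rel V) : Prop :=
  forall x y : V, connect e x y.

Definition is_tree (V : finType) (e : rel V) : Prop :=
  simple_graph e /\ connected_graph e /\ ~ has_cycle e.

Definition max_deg_le (V : finType) (e : rel V) (D : nat) : Prop :=
  forall v : V, #|[set u | e v u]| <= D.

Definition induced (V : finType) (e : rel V) (S : {set V}) : rel V :=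
  [rel x y | [&& e x y, x \in S & y \in S]].

(* A subtree of the tree T (given by its vertex set; in a tree a connected
   subgraph is determined by its vertex set, being the induced subgraph):
   a nonempty vertex set inducing a connected subgraph. *)
Definition is_subtree (V : finType) (e : rel V) (S : {set V}) : Prop :=
  S != set0 /\ forall x y, x \in S -> y \in S -> connect (induced e S) x y.

Definition simple_path (V : finType) (e : rel V) (u w : V) (p : seq V) : Prop :=
  path e u p /\ last u p = w /\ uniq (u :: p).

Definition is_depth (V : finType) (e : rel V) (r v : V) (d : nat) : Prop :=
  exists p, simple_path e r v p /\ size p = d.

Definition Tsub (V : finType) (e : rel V) (r v : V) : {set V} :=
  [set u | `[< forall p, simple_path e u r p -> v \in u :: p >]].

From HB Require Import structures.
From mathcomp Require Import all_boot all_order all_algebra.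
From mathcomp Require Import boolp reals exp.
From mathcomp Require Import zify lra.
Import Order.TTheory GRing.Theory Num.Theory.
Set Implicit Arguments. Unset Strict Implicit. Unset Printing Implicit Defensive.

(* The subtrees are cut off greedily.  Once an up-closed set U of vertices is
   covered, let s := (n0 - |U| + 1)^(1/4) and K := ceil s, and let t be a
   shallowest uncovered vertex.  Starting from t, take the whole subtrees of
   the children of t with fewer than K vertices and, if this is still short of
   K vertices, recurse into a child whose subtree has at least K vertices.
   This yields a subtree rooted at t with between K and K + D(K - 1) <= 5/2 D s
   vertices, and every vertex outside it whose parent lies in it roots a
   subtree of at least K vertices.  Hence the invariant "every uncovered
   vertex whose parent is covered roots at least s vertices" survives, as s
   only decreases; it holds at the start because n0 < n^4, and it is what
   makes the next step possible. *)

Lemma card_bigcup_le (I T : finType) (P : {pred I}) (F : I -> {set T}) :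
  #|\bigcup_(i in P) F i| <= \sum_(i in P) #|F i|.
Proof.
elim/big_ind2: _ => [|m A n B hA hB|//]; first by rewrite cards0.
by apply: leq_trans (leq_card_setU A B) _; apply: leq_add.
Qed.

Definition del_edge (V : finType) (e : rel V) (x y : V) : rel V :=
  [rel a b | e a b && ~~ ((a == x) && (b == y) || (a == y) && (b == x))].

Lemma del_edge_sym (V : finType) (e : rel V) x y :
  symmetric e -> symmetric (del_edge e x y).
Proof.
move=> esym a b; rewrite /del_edge /= esym; congr (_ && ~~ _).
by rewrite orbC; congr orb; rewrite andbC.
Qed.

Lemma acyclic_del_edge (V : finType) (e : rel V) x y :
  simple_graph e -> ~ has_cycle e -> e x y -> ~ connect (del_edge e x y) x y.
Proof.
move=> [esym eirr] acyc exy /connectP[p pp yl].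
case: (shortenP pp) yl => p' pp' up' _ yl; apply: acyc.
have xy : x != y by apply: contraTneq exy => ->; rewrite eirr.
exists x, p'; split; last split => //; last split.
- case: p' pp' up' yl => [|z [|w q]] //= pp' _ yl; first by rewrite yl eqxx in xy.
  by move: pp'; rewrite -yl /del_edge /= !eqxx andbF.
- by apply: sub_path pp' => a b /andP[].
- by rewrite -yl esym.
Qed.

Section RealBounds.
Local Open Scope ring_scope.

Lemma exists_nat_ceil (R : archiRealFieldType) (s : R) :
  1 <= s -> exists2 K : nat, (0 < K)%N & (K.-1)%:R < s <= K%:R.
Proof.
move=> s1; have s0 : 0 <= s by apply: le_trans s1.
have [|K sK Kmin] := ex_minnP (_ : exists K : nat, s <= K%:R).
  by exists (Num.bound s); rewrite ltW // archi_boundP.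
have K0 : (0 < K)%N.
  by rewrite lt0n; apply: contraTneq sK => ->; rewrite -ltNge; apply: lt_le_trans s1.
exists K => //; rewrite sK andbT ltNge; apply/negP => /Kmin.
by rewrite leqNgt ltn_predL K0.
Qed.

Lemma ceil_size_bound (R : realFieldType) (D K p : nat) (s : R) : (2 <= D)%N -> 1 <= s ->
  (0 < K)%N -> (K.-1)%:R < s -> (p <= K + D * K.-1)%N -> p%:R <= 5%:R / 2%:R * D%:R * s.
Proof.
move=> D2 s1 K0 Ks pK.
have {}pK : p%:R <= (K.-1)%:R + 1 + D%:R * (K.-1)%:R :> R.
  by rewrite -natrM natr1 prednK // -natrD ler_nat.
have hD : 2 <= D%:R :> R by rewrite (ler_nat R 2 D).
have : D%:R * (K.-1)%:R <= D%:R * s :> R by rewrite ler_wpM2l // ltW.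
have : 0 <= (K.-1)%:R :> R by [].
nra.
Qed.

End RealBounds.

Section Tree.
Variables (V : finType) (e : rel V) (r : V).
Hypothesis tree : is_tree e.

Let tree_simple : simple_graph e. Proof. by case: tree. Qed.
Let esym : symmetric e. Proof. by case: tree => [[]]. Qed.

Lemma exists_root_path v :
  exists n, `[< exists p, path e r p /\ last r p = v /\ size p = n >].
Proof.
case: tree => _ [/(_ r v) /connectP[p pp lp] _].
by exists (size p); apply/asboolP; exists p.
Qed.

Definition depth v : nat := ex_minn (exists_root_path v).

Lemma depthP v : exists2 p, path e r p & last r p = v /\ size p = depth v.
Proof. by rewrite /depth; case: ex_minnP => m /asboolP[p [pp ?]]; exists p. Qed.

Lemma depth_min v p : path e r p -> last r p = v -> depth v <= size p.
Proof.
move=> pp lp; rewrite /depth; case: ex_minnP => m _; apply.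
by apply/asboolP; exists p.
Qed.

Lemma depth_root : depth r = 0.
Proof. by apply/eqP; rewrite -leqn0; apply: (@depth_min r [::]). Qed.

Lemma depth_eq0 v : depth v = 0 -> v = r.
Proof. by case: (depthP v) => [[|x p] _ [lp sp]] h0 //=; rewrite h0 in sp. Qed.

Lemma depth_edge u v : e u v -> depth v <= (depth u).+1.
Proof.
case: (depthP u) => p pp [lp sp] euv; rewrite -sp -(size_rcons p v).
by apply: depth_min; rewrite ?last_rcons // rcons_path pp lp.
Qed.

Lemma exists_parent v : v != r -> exists u, e u v && ((depth u).+1 == depth v).
Proof.
move=> vr; case: (depthP v) => p + [].
case/lastP: p => [_ /= vr'|q w]; first by rewrite vr' eqxx in vr.
rewrite rcons_path last_rcons size_rcons => /andP[pq ew] wv sq; subst w.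
exists (last r q); rewrite ew /=.
by apply/eqP; have := depth_min pq (erefl _); have := depth_edge ew; lia.
Qed.

Definition parent v : V :=
  if [pick u | e u v && ((depth u).+1 == depth v)] is Some u then u else v.

Lemma parent_root : parent r = r.
Proof. by rewrite /parent; case: pickP => // u /andP[_]; rewrite depth_root. Qed.

Lemma parentP v : v != r -> e (parent v) v /\ (depth (parent v)).+1 = depth v.
Proof.
move=> vr; rewrite /parent; case: pickP => [u /andP[-> /eqP]//|none].
by case: (exists_parent vr) => u; rewrite none.
Qed.

Lemma depth_parent v : depth (parent v) = (depth v).-1.
Proof.
case: (eqVneq v r) => [->|vr]; first by rewrite parent_root depth_root.
by case: (parentP vr) => _ <-.
Qed.

Definition desc t : {set V} := [set u | `[< exists j, iter j parent u = t >]].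

Lemma descP t u : reflect (exists j, iter j parent u = t) (u \in desc t).
Proof. by rewrite inE; apply: (iffP (asboolP _)). Qed.

Lemma desc_refl u : u \in desc u.
Proof. by apply/descP; exists 0. Qed.

Lemma desc_trans u v w : u \in desc v -> v \in desc w -> u \in desc w.
Proof.
by move=> /descP[j1 h1] /descP[j2 h2]; apply/descP; exists (j2 + j1); rewrite iterD h1.
Qed.

Lemma desc_parent c : c \in desc (parent c).
Proof. by apply/descP; exists 1. Qed.

Lemma parent_desc t u : u \in desc t -> u != t -> parent u \in desc t.
Proof.
move=> /descP[[|j] h] ut; first by rewrite -h eqxx in ut.
by apply/descP; exists j; rewrite -iterSr.
Qed.

Lemma depth_iter_parent j u : depth (iter j parent u) = depth u - j.
Proof. by elim: j => [|j IH]; rewrite ?subn0 //= depth_parent IH subnS. Qed.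

Lemma depth_desc t u : u \in desc t -> depth t <= depth u.
Proof. by move=> /descP[j <-]; rewrite depth_iter_parent leq_subr. Qed.

Lemma desc_root u : u \in desc r.
Proof.
by apply/descP; exists (depth u); apply: depth_eq0; rewrite depth_iter_parent subnn.
Qed.

Lemma iter_parent_root j : iter j parent r = r.
Proof. by elim: j => //= j ->; rewrite parent_root. Qed.

Lemma root_desc t : (r \in desc t) = (t == r).
Proof.
apply/idP/eqP => [/descP[j]|->]; last exact: desc_refl.
by rewrite iter_parent_root => <-.
Qed.

Lemma connect_to_ancestor (E : rel V) (P : {set V}) t z :
  (forall u, u \in P -> u != t -> E u (parent u) && (parent u \in P)) ->
  z \in desc t -> z \in P -> connect E z t.
Proof.
move=> hE /descP[j]; elim: j z => [|j IH] z; first by move=> /= -> _; apply: connect0.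
case: (eqVneq z t) => [-> _ _|zt]; first exact: connect0.
rewrite iterSr => /IH conn zP; case/andP: (hE z zP zt) => Ez pzP.
exact: connect_trans (connect1 Ez) (conn pzP).
Qed.

(* Every edge of the tree joins a vertex to its parent: otherwise the parent
   edges alone would join its endpoints around it, closing a cycle. *)
Lemma edge_parent x y : e x y ->
  (x != r) && (parent x == y) || (y != r) && (parent y == x).
Proof.
move=> exy; apply/negPn/negP => H.
case: tree => _ [_ acyc]; apply: (acyclic_del_edge tree_simple acyc exy).
have toR z : connect (del_edge e x y) z r.
  apply: (connect_to_ancestor (P := setT)) => [u _ ur||]; rewrite ?desc_root ?inE //.
  case: (parentP ur) => eu _; rewrite /del_edge /= esym eu /= andbT.
  apply: contra H.
  by case/orP=> /andP[/eqP ux /eqP pu]; rewrite -ux -pu ur eqxx ?orbT.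
apply: connect_trans (toR x) _.
by rewrite (sym_connect_sym (del_edge_sym x y esym)).
Qed.

Lemma depth_down_path x p : path e x p -> uniq (x :: p) ->
  (x == r) || (parent x \notin p) -> depth (last x p) = depth x + size p.
Proof.
elim: p x => [|y p IH] x /=; first by rewrite addn0.
case/andP=> exy pp /andP[xp up] up_ok.
case/orP: (edge_parent exy) => /andP[xr /eqP pxy].
  by move: up_ok; rewrite (negbTE xr) pxy inE eqxx.
rewrite IH // ?pxy; last by move: xp; rewrite inE negb_or => /andP[_ ->]; rewrite orbT.
by case: (parentP xr) => _; rewrite pxy => <-; rewrite addSnnS.
Qed.

Lemma is_depth_depth v d : is_depth e r v d -> d = depth v.
Proof. by case=> p [[pp [<- up]] <-]; rewrite depth_down_path ?eqxx // depth_root. Qed.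

Lemma desc_sub_Tsub t : desc t \subset Tsub e r t.
Proof.
apply/subsetP => u ut; rewrite inE; apply/asboolP => p [pp [lp _]].
elim: p u ut pp lp => [|y p IH] u ut /=.
  by move=> _ ur; move: ut; rewrite ur root_desc => /eqP->; rewrite inE.
case/andP => euy pp lp; rewrite inE.
case: (eqVneq u t) => [//|ut'] /=; apply: IH pp lp.
case/orP: (edge_parent euy) => /andP[_ /eqP pu].
  by rewrite -pu; apply: parent_desc.
by rewrite -pu in ut; apply: desc_trans (desc_parent y) ut.
Qed.

Definition children x : {set V} := [set c | (c != r) && (parent c == x)].

Lemma depth_children x c : c \in children x -> depth c = (depth x).+1.
Proof. by rewrite inE => /andP[cr /eqP <-]; case: (parentP cr). Qed.

Lemma children_desc x c : c \in children x -> c \in desc x.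
Proof. by rewrite inE => /andP[_ /eqP <-]; apply: desc_parent. Qed.

Lemma notin_desc_children x c : c \in children x -> x \notin desc c.
Proof. by move=> cx; apply/negP => /depth_desc; rewrite (depth_children cx) ltnn. Qed.

Lemma desc_children_proper x c : c \in children x -> desc c \proper desc x.
Proof.
move=> cx; apply/properP; split; last by exists x; rewrite ?desc_refl ?notin_desc_children.
by apply/subsetP => u uc; apply: desc_trans uc (children_desc cx).
Qed.

Lemma desc_childrenP x u :
  u \in desc x -> u = x \/ exists2 c, c \in children x & u \in desc c.
Proof.
move=> /descP[j]; elim: j u => [|j IH] u /=; first by left.
case: (eqVneq (iter j parent u) r) => [ir|ir hx].
  by rewrite ir parent_root => hx; apply: IH; rewrite ir.
by right; exists (iter j parent u); [rewrite inE ir hx eqxx | apply/descP; exists j].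
Qed.

Lemma desc_children_eq x c c' u : c \in children x -> c' \in children x ->
  u \in desc c -> u \in desc c' -> c = c'.
Proof.
move=> cx c'x /descP[j hj] /descP[j' hj'].
have := depth_iter_parent j u; have := depth_iter_parent j' u.
rewrite hj hj' (depth_children cx) (depth_children c'x) => h h'.
have jj : j = j' by lia.
by rewrite -hj -hj' jj.
Qed.

Lemma card_children D x : max_deg_le e D -> #|children x| <= D.
Proof.
move=> hD; apply: leq_trans (hD x); apply: subset_leq_card; apply/subsetP => c.
by rewrite !inE => /andP[cr /eqP <-]; case: (parentP cr).
Qed.

Definition rooted_subtree t (P : {set V}) :=
  [/\ t \in P, P \subset desc t & forall u, u \in P -> u != t -> parent u \in P].

Lemma rooted_subtree_is_subtree t P : rooted_subtree t P -> is_subtree e P.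
Proof.
case=> tP Pt Pup; split; first by apply/set0Pn; exists t.
have toT u : u \in P -> connect (induced e P) u t.
  move=> uP; apply: connect_to_ancestor (subsetP Pt u uP) uP => w wP wt.
  have wr : w != r.
    by apply: contraNneq wt => wr; move: (subsetP Pt w wP); rewrite wr root_desc => /eqP->.
  by case: (parentP wr) => ew _; rewrite /induced /= esym ew wP Pup.
move=> x y xP yP; apply: connect_trans (toT x xP) _.
rewrite (sym_connect_sym (_ : symmetric (induced e P))) ?toT //.
by move=> a b; rewrite /induced /= esym; congr (_ && _); rewrite andbC.
Qed.

Lemma rooted_subtree_graft x c S P : c \in children x ->
  rooted_subtree x S -> rooted_subtree c P -> rooted_subtree x (S :|: P).
Proof.
move=> cx [xS Sx Sup] [cP Pc Pup]; split; first by rewrite inE xS.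
  rewrite subUset Sx; apply: subset_trans Pc _.
  by apply/subsetP => u uc; apply: desc_trans uc (children_desc cx).
move=> u /setUP[uS|uP] ux; first by rewrite inE Sup.
case: (eqVneq u c) => [->|uc]; last by rewrite inE Pup ?orbT.
by move: cx; rewrite inE => /andP[_ /eqP ->]; rewrite inE xS.
Qed.

Definition heavy_boundary K (P : {set V}) :=
  forall u, u \notin P -> parent u \in P -> u != r -> K <= #|desc u|.

Lemma heavy_boundaryU K S P :
  heavy_boundary K S -> heavy_boundary K P -> heavy_boundary K (S :|: P).
Proof.
move=> hS hP u; rewrite in_setU negb_or => /andP[uS uP] /setUP[]; first exact: hS.
exact: hP.
Qed.

Definition light_top K x : {set V} :=
  x |: \bigcup_(c in children x | #|desc c| < K) desc c.

Lemma rooted_light_top K x : rooted_subtree x (light_top K x).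
Proof.
split; first exact: setU11.
  apply/subsetP => u /setU1P[->|/bigcupP[c /andP[cx _] uc]]; first exact: desc_refl.
  exact: desc_trans uc (children_desc cx).
move=> u /setU1P[->|/bigcupP[c cS uc] _]; first by rewrite eqxx.
case: (eqVneq u c) => [->|uc'].
  by move: cS; rewrite inE => /andP[/andP[_ /eqP ->] _]; rewrite setU11.
by apply/setU1P; right; apply/bigcupP; exists c => //; apply: parent_desc.
Qed.

Lemma heavy_boundary_light_top K x : heavy_boundary K (light_top K x).
Proof.
move=> u; rewrite in_setU1 negb_or => /andP[_ /bigcupP uS] /setU1P[pu|/bigcupP[c cS uc]] ur.
  rewrite leqNgt; apply: contra_notN uS => light.
  by exists u; rewrite ?desc_refl // !inE ur pu eqxx.
by apply: contra_notT uS => _; exists c => //; apply: desc_trans (desc_parent u) uc.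
Qed.

Lemma card_light_top D K x : max_deg_le e D -> #|light_top K x| <= 1 + D * K.-1.
Proof.
move=> hD; apply: leq_trans (leq_card_setU _ _) _; rewrite cards1 leq_add2l.
apply: leq_trans (card_bigcup_le _ _) _.
apply: leq_trans (_ : \sum_(c in children x | #|desc c| < K) K.-1 <= _).
  by apply: leq_sum => c /andP[_ light]; rewrite -ltnS prednK // (leq_ltn_trans _ light).
rewrite sum_nat_const leq_mul2r (leq_trans _ (card_children x hD)) ?orbT //.
by apply: subset_leq_card; apply/subsetP => c /andP[].
Qed.

Lemma desc_sub_light_top K x :
  (forall c, c \in children x -> #|desc c| < K) -> desc x \subset light_top K x.
Proof.
move=> light; apply/subsetP => u /desc_childrenP[->|[c cx uc]]; first exact: setU11.
by apply/setU1P; right; apply/bigcupP; exists c; rewrite // cx light.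
Qed.

Lemma disjoint_light_top K x c :
  c \in children x -> K <= #|desc c| -> [disjoint light_top K x & desc c].
Proof.
move=> cx heavy; rewrite -setI_eq0; apply/eqP/setP => u; rewrite in_setI in_set0.
apply/negP => /andP[/setU1P[->|/bigcupP[c' /andP[c'x light] uc']] uc].
  by move: (notin_desc_children cx); rewrite uc.
by rewrite (desc_children_eq cx c'x uc uc') leqNgt light in heavy.
Qed.

(* Stated for any target [m <= K] so that the recursion into a heavy child can
   ask for just the vertices still missing. *)
Lemma exists_heavy_rooted_subtree D K m x : max_deg_le e D ->
  0 < m <= K -> K <= #|desc x| ->
  exists P, [/\ rooted_subtree x P, heavy_boundary K P & m <= #|P| <= m + D * K.-1].
Proof.
move=> hD; elim: {x}#|desc x| {-2}x (leqnn #|desc x|) m => [|N IH] x hN m /andP[m0 mK] hK.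
  by move: (leq_trans hK hN); rewrite leqn0 => /eqP; lia.
have hS := card_light_top K x hD; set S := light_top K x in hS *.
case: (leqP m #|S|) => [mS|Sm].
  exists S; split; [exact: rooted_light_top | exact: heavy_boundary_light_top |].
  by rewrite mS /=; lia.
have [c cx heavy] : exists2 c, c \in children x & K <= #|desc c|.
  apply/exists_inP; apply: contraTT hK => /exists_inPn light; rewrite -ltnNge.
  apply: leq_ltn_trans (subset_leq_card (desc_sub_light_top (K := K) _)) _ => [c /light|].
    by rewrite ltnNge.
  exact: leq_trans Sm mK.
have cN : #|desc c| <= N.
  by rewrite -ltnS (leq_trans (proper_card (desc_children_proper cx))).
have [|P [cP hP /andP[Pm PM]]] := IH c cN (m - #|S|) _ heavy.
  by apply/andP; split; lia.
have disj : [disjoint S & P].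
  by apply: disjointWr (disjoint_light_top cx heavy); case: cP.
exists (S :|: P); split.
- exact: rooted_subtree_graft cx (rooted_light_top K x) cP.
- by apply: heavy_boundaryU hP; apply: heavy_boundary_light_top.
- by move: disj; rewrite -(leq_card_setU S P).2 => /eqP->; apply/andP; split; lia.
Qed.

Definition fcons (T : Type) (x : T) (f : nat -> T) (i : nat) : T :=
  if i is i'.+1 then f i' else x.

Lemma bigcup_fcons (T : finType) (A : {set T}) (F : nat -> {set T}) k :
  \bigcup_(i < k.+1) fcons A F i = A :|: \bigcup_(i < k) F i.
Proof. by rewrite big_ord_recl. Qed.

Section Greedy.
Local Open Scope ring_scope.
Variables (R : realType) (D n0 : nat).
Hypotheses (maxD : max_deg_le e D) (D2 : (2 <= D)%N) (Vn0 : (#|V| <= n0)%N).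

Definition target_size (X : {set V}) : R := (n0%:R - #|X|%:R + 1) `^ (1 / 4%:R).

Lemma target_size_le (X Y : {set V}) : (#|X| <= #|Y|)%N -> target_size Y <= target_size X.
Proof.
move=> XY; have : #|Y|%:R <= n0%:R :> R by rewrite ler_nat (leq_trans (max_card _)).
have : #|X|%:R <= #|Y|%:R :> R by rewrite ler_nat.
by move=> h1 h2; apply: ge0_ler_powR; rewrite ?nnegrE; lra.
Qed.

Lemma target_size_ge1 X : 1 <= target_size X.
Proof.
have : #|X|%:R <= n0%:R :> R by rewrite ler_nat (leq_trans (max_card _)).
move=> Xn0; apply: le_trans (_ : 1 `^ (1 / 4%:R) <= _); first by rewrite powR1.
by apply: ge0_ler_powR; rewrite ?nnegrE; lra.
Qed.

Lemma target_size0_le n : #|V| = n -> (n0 < n ^ 4)%N -> target_size set0 <= n%:R.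
Proof.
move=> Vn n0n; rewrite /target_size cards0 subr0.
have n0n' : n0%:R + 1 <= n%:R ^+ 4 :> R by rewrite natr1 -natrX ler_nat.
apply: le_trans (_ : (n%:R ^+ 4) `^ (1 / 4%:R) <= _).
  by apply: ge0_ler_powR; rewrite ?nnegrE ?exprn_ge0 ?addr_ge0 ?divr_ge0.
rewrite -powR_mulrn // -powRrM mul1r mulfV ?pnatr_eq0 //.
by rewrite powRr1.
Qed.

Definition up_closed (U : {set V}) := forall u, u \in U -> parent u \in U.

Definition frontier_large (U : {set V}) := forall u, u \notin U ->
  parent u \in U \/ u = r -> target_size U <= #|desc u|%:R.

Lemma shallowest_uncovered U t : up_closed U -> t \notin U ->
  (forall u, u \notin U -> (depth t <= depth u)%N) -> parent t \in U \/ t = r.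
Proof.
move=> Uup tU tmin; case: (eqVneq t r) => [|tr]; [by right | left].
apply/negPn/negP => /tmin; case: (parentP tr) => _ <-.
by rewrite ltnn.
Qed.

Lemma desc_uncovered U t : up_closed U -> t \notin U -> desc t \subset ~: U.
Proof.
move=> Uup tU; apply/subsetP => u /descP[j ut]; rewrite in_setC.
by apply: contra tU; rewrite -ut; elim: j {ut} => //= j IH /IH /Uup.
Qed.

Lemma up_closedU U t P : up_closed U -> rooted_subtree t P ->
  parent t \in U \/ t = r -> up_closed (U :|: P).
Proof.
move=> Uup [tP _ Pup] tfront u /setUP[uU|uP]; first by rewrite inE Uup.
case: (eqVneq u t) => [->|ut]; last by rewrite inE Pup ?orbT.
case: tfront => [ptU|tr]; first by rewrite inE ptU.
by rewrite tr parent_root -tr inE tP orbT.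
Qed.

Lemma frontier_largeU U P K : frontier_large U -> heavy_boundary K P ->
  target_size U <= K%:R -> frontier_large (U :|: P).
Proof.
move=> hU hP UK u; rewrite in_setU negb_or => /andP[uU uP] ufront.
apply: le_trans (target_size_le (subset_leq_card (subsetUl U P))) _.
case: (eqVneq u r) => [ur|ur]; first by apply: hU => //; right.
case: ufront => [/setUP[puU|puP]|ur']; last by rewrite ur' eqxx in ur.
  by apply: hU => //; left.
by apply: le_trans UK _; rewrite ler_nat; apply: hP.
Qed.

Definition greedy_cover U k (Ts : nat -> {set V}) (ts : nat -> V) :=
  [/\ forall i, (i < k)%N -> rooted_subtree (ts i) (Ts i) /\ Ts i \subset ~: U,
      forall i j, (i < k)%N -> (j < k)%N -> i != j -> [disjoint Ts i & Ts j],
      U :|: \bigcup_(i < k) Ts i = [set: V],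
      forall i j, (i <= j < k)%N -> (depth (ts i) <= depth (ts j))%N &
      forall i, (i < k)%N -> let X := U :|: \bigcup_(j < i) Ts j in
        target_size X <= #|Ts i|%:R <= 5%:R / 2%:R * D%:R * target_size X].

Lemma greedy_cover0 U Ts ts : ~: U = set0 -> greedy_cover U 0 Ts ts.
Proof.
move=> UT; split => [//|//||i j /andP[_ //]|//].
by rewrite big_ord0 setU0 -[U]setCK UT setC0.
Qed.

Lemma greedy_cover_cons U t P k Ts ts :
  rooted_subtree t P -> P \subset ~: U ->
  (forall u, u \notin U -> (depth t <= depth u)%N) ->
  target_size U <= #|P|%:R <= 5%:R / 2%:R * D%:R * target_size U ->
  greedy_cover (U :|: P) k Ts ts -> greedy_cover U k.+1 (fcons P Ts) (fcons t ts).
Proof.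
move=> tP PU tmin Psize [Tsub Tdisj Tcover Tdepth Tsize].
have UPU : ~: (U :|: P) \subset ~: U by rewrite setCS subsetUl.
have disjP i : (i < k)%N -> [disjoint P & Ts i].
  move=> ik; rewrite disjoint_sym disjoint_subset.
  case: (Tsub i ik) => _ /subset_trans; apply.
  by apply/subsetP => u; rewrite !inE negb_or => /andP[].
split.
- case=> [|i] /= ik; first by split.
  by case: (Tsub i ik) => ? /subset_trans sub; split => //; apply: sub UPU.
- case=> [|i] [|j] //= ik jk ij; [exact: disjP | rewrite disjoint_sym; exact: disjP |].
  exact: Tdisj.
- by rewrite bigcup_fcons setUA.
- case=> [|i] [|j] //=; last exact: Tdepth.
  move=> jk; have [[tj _ _] /subsetP/(_ _ tj)/(subsetP UPU)] := Tsub j jk.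
  by rewrite in_setC; apply: tmin.
- by case=> [|i] /=; rewrite ?big_ord0 ?setU0 ?bigcup_fcons ?setUA //; apply: Tsize.
Qed.

Lemma exists_greedy_cover U : up_closed U -> frontier_large U ->
  exists k Ts ts, greedy_cover U k Ts ts.
Proof.
elim: {U}#|~: U| {-2}U (leqnn #|~: U|) => [|N IH] U hN Uup Ufront.
  by exists 0%N, (fun=> set0), (fun=> r); apply/greedy_cover0/eqP; rewrite -cards_eq0 -leqn0.
have [UT|[t0 t0U]] := set_0Vmem (~: U).
  by exists 0%N, (fun=> set0), (fun=> r); apply: greedy_cover0.
have [t tU' tmin'] := arg_minnP depth t0U.
have tU : t \notin U by rewrite -in_setC.
have tmin u : u \notin U -> (depth t <= depth u)%N by rewrite -in_setC; apply: tmin'.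
have tfront := shallowest_uncovered Uup tU tmin.
have [K K0 /andP[Ks sK]] := exists_nat_ceil (target_size_ge1 U).
have Kt : (K <= #|desc t|)%N.
  by rewrite -(prednK K0) -(ltr_nat R); apply: lt_le_trans Ks (Ufront t tU tfront).
have [|P [tP hP /andP[KP PK]]] := exists_heavy_rooted_subtree maxD (_ : (0 < K <= K)%N) Kt.
  by rewrite K0 leqnn.
have PU : P \subset ~: U.
  by case: tP => _ Pt _; apply: subset_trans Pt (desc_uncovered Uup tU).
have [|k [Ts [ts cover]]] :=
  IH (U :|: P) _ (up_closedU Uup tP tfront) (frontier_largeU Ufront hP sK).
  rewrite -ltnS (leq_trans _ hN) // proper_card // properC properUl //.
  by apply/subsetPn; exists t; case: tP.
exists k.+1, (fcons P Ts), (fcons t ts); apply: greedy_cover_cons cover => //.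
rewrite (le_trans sK) ?ler_nat //=.
exact: ceil_size_bound D2 (target_size_ge1 U) K0 Ks PK.
Qed.

End Greedy.

End Tree.

Theorem lemma3p4 (R : realType) (V : finType) (e : rel V) (r : V)
    (n D n0 : nat) :
  (2 <= n)%N -> (2 <= D)%N -> #|V| = n ->
  is_tree e -> max_deg_le e D ->
  (n <= n0)%N -> (n0 < n ^ 4)%N ->
  exists (k : nat) (Ts : nat -> {set V}) (ts : nat -> V),
    (* rooted subtrees (T_i, t_i), indexed 0 <= i < k *)
    (forall i, (i < k)%N -> is_subtree e (Ts i) /\ ts i \in Ts i) /\
    (* pairwise vertex-disjoint *)
    (forall i j, (i < k)%N -> (j < k)%N -> i != j -> [disjoint Ts i & Ts j]) /\
    (* (i) they cover V(T) *)
    (\bigcup_(i < k) Ts i = [set: V]) /\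
    (* (ii) T_i is contained in T(t_i) *)
    (forall i, (i < k)%N -> Ts i \subset Tsub e r (ts i)) /\
    (* (iii) depths of t_1, ..., t_k are non-decreasing *)
    (forall i j d1 d2, (i <= j)%N -> (j < k)%N ->
        is_depth e r (ts i) d1 -> is_depth e r (ts j) d2 -> (d1 <= d2)%N) /\
    (* (iv) with n_{i-1} = n0 - |T_1 u ... u T_{i-1}| + 1 *)
    (forall i, (i < k)%N ->
        let m : R := (n0%:R - #|\bigcup_(j < i) Ts j|%:R + 1)%R in
        (m `^ (1 / 4%:R) <= #|Ts i|%:R)%R /\
        (#|Ts i|%:R <= 5%:R / 2%:R * D%:R * m `^ (1 / 4%:R))%R).
Proof.
move=> _ D2 Vn tree maxD nn0 n0n.
have Vn0 : (#|V| <= n0)%N by rewrite Vn.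
have up0 : up_closed r tree (set0 : {set V}) by move=> u; rewrite inE.
have front0 : frontier_large r tree R n0 set0.
  move=> u _ [|->]; first by rewrite inE.
  rewrite (_ : desc r tree r = setT); first by rewrite cardsT Vn target_size0_le.
  by apply/setP => v; rewrite in_setT desc_root.
have [k [Ts [ts [Tsub Tdisj Tcover Tdepth Tsize]]]] :=
  exists_greedy_cover maxD D2 Vn0 up0 front0.
exists k, Ts, ts; split; [|split; [exact: Tdisj|split; [|split; [|split]]]].
- by move=> i /Tsub[tT _]; split; [apply: rooted_subtree_is_subtree tT | case: tT].
- by rewrite -Tcover set0U.
- by move=> i /Tsub[[_ Tt _] _]; apply: subset_trans Tt (desc_sub_Tsub _ _ _).
- by move=> i j d1 d2 ij jk /is_depth_depth-> /is_depth_depth->; apply: Tdepth; rewrite ij.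
- by move=> i /Tsize /=; rewrite set0U => /andP.
Qed.
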